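(* Let $\mathcal{G}$ be a GBS graph of groups, $w=a_0^{k_0}y_1a_1^{k_1}\cdots y_na_n^{k_n}$ a $\mathcal{G}$-factorization, and $\sim_{\mathcal{C}}$ the relation on $\{1,\dots,n\}$ defined by: $i\sim_{\mathcal{C}}j$ iff $y_i=\bar y_j$ and (if $i<j$) $\rho(w_{i,j-1})=0$ and $k_{i,j-1}\in\beta_{y_i}\mathbb{Z}$, resp. (if $j<i$) $\rho(w_{j,i-1})=0$ and $k_{j,i-1}\in\beta_{y_j}\mathbb{Z}$. Define $i\approx j$ iff $i=j$ or there exists $\ell$ with $i\sim_{\mathcal{C}}\ell$ and $\ell\sim_{\mathcal{C}}j$. Then $\approx$ is an equivalence relation on $\{1,\dots,n\}$.
   Context: $\mathcal{G}$ consists of a finite connected graph $Y$ (vertices $V(Y)$, edges $E(Y)$, maps $\iota,\tau:E(Y)\to V(Y)$, fixed-point-free involution $y\mapsto\bar y$ with $\iota(\bar y)=\tau(y)$) and integers $\alpha_y,\beta_y\in\mathbb{Z}\setminus\{0\}$ with $\alpha_y=\beta_{\bar y}$. A $\mathcal{G}$-factorization is a word $a_0^{k_0}y_1a_1^{k_1}\cdots y_na_n^{k_n}$ with $\iota(y_i)=a_{i-1}$, $\tau(y_i)=a_i$, $a_n=a_0$, $k_i\in\mathbb{Z}$. For $0\le i\le j\le n$: $w_{i,j}=a_i^{k_i}y_{i+1}\cdots y_ja_j^{k_j}$ and $k_{i,j}=\sum_{\nu=i}^{j}k_\nu\prod_{\mu=i+1}^{\nu}\alpha_{y_\mu}/\beta_{y_\mu}\in\mathbb{Q}$.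 Fix an orientation $D\subseteq E(Y)$ (one of $y,\bar y$ for each edge); $\rho$ maps words additively to $\mathbb{Z}^D$ with $\rho(a^k)=0$, $\rho(y)=e_y$, $\rho(\bar y)=-e_y$ for $y\in D$. *)

From HB Require Import structures.
From mathcomp Require Import all_boot all_order all_algebra.
Set Implicit Arguments. Unset Strict Implicit. Unset Printing Implicit Defensive.
Import Order.TTheory GRing.Theory Num.Theory.
Local Open Scope ring_scope.

Record GBS := {
  V : finType;
  E : finType;
  iota : E -> V;
  tau : E -> V;
  bar : E -> E;
  alpha : E -> int;
  beta : E -> int;
  bar_inv : forall y, bar (bar y) = y;
  bar_nofix : forall y, bar y != y;
  iota_bar : forall y, iota (bar y) = tau y;
  connected : forall u v : V,
    connect (fun u v => [exists e, (iota e == u) && (tau e == v)]) u v;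
  alpha_nz : forall y, alpha y != 0;
  beta_nz : forall y, beta y != 0;
  alpha_beta_bar : forall y, alpha y = beta (bar y)
}.

Definition orientation (G : GBS) (D : {pred E G}) : Prop :=
  forall y : E G, (y \in D) != (bar y \in D).

(* A G-factorization a_0^{k_0} y_1 a_1^{k_1} ... y_n a_n^{k_n}, encoded by
   a : nat -> V (indices 0..n), y : nat -> E (indices 1..n),
   k : nat -> int (indices 0..n). *)
Definition factorization (G : GBS) (n : nat) (a : nat -> V G)
    (y : nat -> E G) : Prop :=
  (forall i, (1 <= i <= n)%N -> iota (y i) = a i.-1 /\ tau (y i) = a i)
  /\ a n = a 0%N.

(* rho(w_{i,j}) in Z^D (coordinates outside D set to 0): for d in D, the
   number of occurrences of d minus that of bar d among y_{i+1},...,y_j. *)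
Definition rho_w (G : GBS) (D : {pred E G}) (y : nat -> E G) (i j : nat)
  : {ffun E G -> int} :=
  [ffun d => if d \in D then
      \sum_(i.+1 <= m < j.+1) ((y m == d)%:Z - (y m == bar d)%:Z)
    else 0].

Definition kq (G : GBS) (y : nat -> E G) (k : nat -> int) (i j : nat) : rat :=
  \sum_(i <= nu < j.+1)
     ((k nu)%:~R * \prod_(i.+1 <= mu < nu.+1)
                    ((alpha (y mu))%:~R / (beta (y mu))%:~R)).

Definition in_multZ (q : rat) (b : int) : Prop := exists z : int, q = (b * z)%:~R.

Definition simC (G : GBS) (D : {pred E G}) (y : nat -> E G) (k : nat -> int)
    (i j : nat) : Prop :=
  y i = bar (y j) /\
  (((i < j)%N /\ rho_w D y i j.-1 = 0 /\ in_multZ (kq y k i j.-1) (beta (y i)))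
   \/
   ((j < i)%N /\ rho_w D y j i.-1 = 0 /\ in_multZ (kq y k j i.-1) (beta (y j)))).

Definition approxC (G : GBS) (D : {pred E G}) (n : nat) (y : nat -> E G)
    (k : nat -> int) (i j : nat) : Prop :=
  i = j \/ exists l, (1 <= l <= n)%N /\ simC D y k i l /\ simC D y k l j.

From mathcomp Require Import all_boot all_order all_algebra.
From mathcomp Require Import ring.
Set Implicit Arguments. Unset Strict Implicit. Unset Printing Implicit Defensive.
Import Order.TTheory GRing.Theory Num.Theory.
Local Open Scope ring_scope.

(* Read everything through prefixes of w.  With R p = rho(w_{0,p}), P p the
   product of alpha/beta along y_1 ... y_p, and X p = sum_{nu<p} k_nu P nu,
   one has k_{i,l-1} P i = X l - X i, so for i < l the condition i ~_C l says
   y_i = bar y_l, R i = R (l-1) and X l / P (l-1) - X i / P i lies in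
   beta_{y_i} Z.  As P p only depends on R p, this condition is symmetric in
   i and l (rescaling by alpha/beta turns beta_{y_i} Z into alpha_{y_i} Z =
   beta_{y_l} Z), and links a ~ b ~ c ~ d compose to a ~ d, the divisibility
   conditions adding up.  Such a three-step transitivity of a symmetric
   relation is exactly what makes its "square" approx transitive. *)

Section TwoStepClosure.

Variables (T : Type) (S : T -> Prop) (r : T -> T -> Prop).

Definition two_step (x z : T) : Prop :=
  x = z \/ exists l, S l /\ r x l /\ r l z.

Hypothesis r_sym : forall x z, S x -> S z -> r x z -> r z x.
Hypothesis r_trans3 : forall a b c d, S a -> S b -> S c -> S d ->
  r a b -> r b c -> r c d -> r a d.

Lemma two_step_sym x z : S x -> S z -> two_step x z -> two_step z x.
Proof.
move=> Sx Sz [->|[l [Sl [rxl rlz]]]]; first by left.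
by right; exists l; split=> //; split; apply: r_sym.
Qed.

Lemma two_step_trans x z w : S x -> S z -> S w ->
  two_step x z -> two_step z w -> two_step x w.
Proof.
move=> Sx Sz Sw [->//|[l [Sl [rxl rlz]]]] [<-|[m [Sm [rzm rmw]]]].
  by right; exists l.
by right; exists m; split=> //; split=> //; exact: (r_trans3 Sx Sl Sz Sm rxl rlz rzm).
Qed.

End TwoStepClosure.

Lemma in_multZD q1 q2 b :
  in_multZ q1 b -> in_multZ q2 b -> in_multZ (q1 + q2) b.
Proof. by move=> [z1 ->] [z2 ->]; exists (z1 + z2); rewrite mulrDr rmorphD. Qed.

Lemma in_multZN q b : in_multZ q b -> in_multZ (- q) b.
Proof. by move=> [z ->]; exists (- z); rewrite mulrN rmorphN. Qed.

Lemma in_multZ_rescale q a b : b != 0 ->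
  in_multZ q b -> in_multZ (q * (a%:~R / b%:~R)) a.
Proof.
move=> b0 [z ->]; exists z; rewrite !rmorphM /=.
by field; rewrite intr_eq0.
Qed.

Section Ratios.

Variable G : GBS.

Definition ratio (e : E G) : rat := (alpha e)%:~R / (beta e)%:~R.

Lemma ratio_neq0 e : ratio e != 0.
Proof. by rewrite /ratio mulf_neq0 ?invr_eq0 ?intr_eq0 ?alpha_nz ?beta_nz. Qed.

Lemma ratio_bar e : ratio (bar e) = (ratio e)^-1.
Proof. by rewrite /ratio alpha_beta_bar bar_inv -alpha_beta_bar invfM invrK mulrC. Qed.

Lemma bar_inj : injective (@bar G).
Proof. exact: can_inj (@bar_inv G). Qed.

Variable D : {pred E G}.

Definition rho_edge (e : E G) : {ffun E G -> int} :=
  [ffun d => if d \in D then (e == d)%:Z - (e == bar d)%:Z else 0].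

Lemma rho_edge_bar e : rho_edge (bar e) = - rho_edge e.
Proof.
apply/ffunP => d; rewrite !ffunE (inj_eq bar_inj) -(inj_eq bar_inj) bar_inv.
by case: (d \in D); rewrite ?opprB ?oppr0.
Qed.

Definition ratio_monomial (v : {ffun E G -> int}) : rat :=
  \prod_(d in D) ratio d ^ v d.

Lemma ratio_monomial0 : ratio_monomial 0 = 1.
Proof. by rewrite /ratio_monomial big1 // => d _; rewrite ffunE expr0z. Qed.

Lemma ratio_monomialD v w :
  ratio_monomial (v + w) = ratio_monomial v * ratio_monomial w.
Proof.
rewrite /ratio_monomial -big_split; apply: eq_bigr => d _.
by rewrite ffunE expfzDr ?ratio_neq0.
Qed.

Lemma ratio_monomial_edge e : orientation D -> ratio_monomial (rho_edge e) = ratio e.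
Proof.
move=> hD; have e_bar : (e == bar e) = false by rewrite eq_sym (negbTE (bar_nofix e)).
wlog eD : e e_bar / e \in D => [hwlog|].
  case eD: (e \in D); first exact: hwlog.
  have bD : bar e \in D by move: (hD e); rewrite eD; case: (bar e \in D).
  rewrite -[e]bar_inv rho_edge_bar ratio_bar -hwlog ?bar_inv //; last by rewrite eq_sym.
  rewrite /ratio_monomial -prodfV; apply: eq_bigr => d _.
  by rewrite ffunE invr_expz.
rewrite /ratio_monomial (bigD1 e) //= big1 ?mulr1 => [|d /andP [dD de]].
  by rewrite ffunE eD eqxx e_bar expr1z.
rewrite ffunE dD eq_sym (negbTE de); case: eqP => [ed|]; last by rewrite expr0z.
by move: (hD d); rewrite -ed dD eD.
Qed.

End Ratios.

Section Prefixes.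

Variables (G : GBS) (D : {pred E G}) (y : nat -> E G) (k : nat -> int).

Local Notation R := (rho_w D y 0).

Definition prefix_ratio (p : nat) : rat := \prod_(1 <= mu < p.+1) ratio (y mu).

Local Notation P := prefix_ratio.

Definition weighted_sum (p : nat) : rat := \sum_(0 <= nu < p) (k nu)%:~R * P nu.

Local Notation X := weighted_sum.

Definition gap (i l : nat) : rat := X l / P l.-1 - X i / P i.

Lemma rho_w_prefix i j : (i <= j)%N -> rho_w D y i j = R j - R i.
Proof.
move=> ij; apply/ffunP => d; rewrite !ffunE; case: (d \in D); last by rewrite subr0.
by rewrite [in RHS](big_cat_nat _ (n := i.+1)) //=; ring.
Qed.

Lemma rho_prefix_pred p : (0 < p)%N -> R p = R p.-1 + rho_edge D (y p).
Proof.
case: p => // p _; apply/ffunP => d; rewrite !ffunE.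
by case: (d \in D); rewrite ?addr0 // big_nat_recr.
Qed.

Lemma prefix_ratio_pred p : (0 < p)%N -> P p = P p.-1 * ratio (y p).
Proof. by case: p => // p _; rewrite /P big_nat_recr. Qed.

Lemma prefix_ratio_neq0 p : P p != 0.
Proof. by rewrite prodf_seq_neq0; apply/allP => mu _; apply: ratio_neq0. Qed.

Hypothesis hD : orientation D.

Lemma prefix_ratio_rho p : P p = ratio_monomial D (R p).
Proof.
elim: p => [|p IHp].
  by rewrite /P big_geq // rho_w_prefix // subrr ratio_monomial0.
by rewrite prefix_ratio_pred // rho_prefix_pred // ratio_monomialD IHp
  ratio_monomial_edge.
Qed.

Lemma kq_prefix i j : (i <= j)%N -> kq y k i j * P i = X j.+1 - X i.
Proof.
move=> ij; rewrite /X [X in X - _](big_cat_nat _ (n := i) (p := j.+1)) //=; last by rewrite ltnW.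
rewrite addrAC subrr add0r /kq mulr_suml; apply: eq_big_nat => nu /andP [inu _].
rewrite -mulrA [RHS]mulrC mulrC; congr (_ * _).
by rewrite mulrC; symmetry; apply: big_cat_nat.
Qed.

Lemma kq_gap i l : (i < l)%N -> P i = P l.-1 -> kq y k i l.-1 = gap i l.
Proof.
move=> il Pil; have il1 : (i <= l.-1)%N by rewrite -ltnS prednK // (leq_ltn_trans _ il).
have := kq_prefix il1; rewrite prednK ?(leq_ltn_trans _ il) // => kqE.
by rewrite /gap -Pil -mulrBl -kqE mulfK ?prefix_ratio_neq0.
Qed.

Lemma gap_swap i l : (0 < i)%N -> P i = P l.-1 -> P i.-1 = P l ->
  gap l i = - (gap i l * ratio (y i)).
Proof.
move=> i0 Pil Pil'; rewrite /gap -Pil -Pil' (prefix_ratio_pred i0) /ratio.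
have := prefix_ratio_neq0 i.-1; have := ratio_neq0 (y i); rewrite /ratio.
have := alpha_nz (y i); have := beta_nz (y i); rewrite -!(intr_eq0 rat) => b0 a0 _ P0.
by field; apply/and3P.
Qed.

Definition linked (i l : nat) : Prop :=
  [/\ y i = bar (y l), R i = R l.-1 & in_multZ (gap i l) (beta (y i))].

Lemma linked_rho_pred i l : (0 < i)%N -> (0 < l)%N ->
  y i = bar (y l) -> R i = R l.-1 -> R i.-1 = R l.
Proof.
move=> i0 l0 yil Ril; rewrite (rho_prefix_pred l0) -Ril (rho_prefix_pred i0) yil.
by rewrite rho_edge_bar subrK.
Qed.

Lemma linked_sym i l : (0 < i)%N -> (0 < l)%N -> linked i l -> linked l i.
Proof.
move=> i0 l0 [yil Ril gil]; have Ril' := linked_rho_pred i0 l0 yil Ril.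
split; first by rewrite yil bar_inv.
  by rewrite Ril'.
rewrite (gap_swap i0) ?prefix_ratio_rho ?Ril ?Ril' //.
have -> : beta (y l) = alpha (y i) by rewrite alpha_beta_bar yil bar_inv.
by apply: in_multZN; apply: in_multZ_rescale; rewrite ?beta_nz.
Qed.

Lemma linked_trans3 a b c d : (0 < b)%N -> (0 < c)%N ->
  linked a b -> linked b c -> linked c d -> linked a d.
Proof.
move=> b0 c0 lab lbc [ycd Rcd gcd]; have [ybc Rbc _] := lbc.
have [_ _ gcb] := linked_sym b0 c0 lbc; case: lab => [yab Rab gab].
have yac : y a = y c by rewrite yab ybc bar_inv.
split; first by rewrite yac.
  by rewrite Rab (linked_rho_pred b0 c0 ybc Rbc).
have -> : gap a d = gap c d + (- gap c b + gap a b) by rewrite /gap; ring.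
by rewrite yac; apply: in_multZD => //; apply: in_multZD; [apply: in_multZN|rewrite -yac].
Qed.

Lemma linked_lt i l : (i < l)%N -> linked i l <->
  [/\ y i = bar (y l), rho_w D y i l.-1 = 0 & in_multZ (kq y k i l.-1) (beta (y i))].
Proof.
move=> il; have il1 : (i <= l.-1)%N by rewrite -ltnS prednK // (leq_ltn_trans _ il).
rewrite rho_w_prefix //; split=> [[yil Ril gil]|[yil /eqP Ril kil]].
  by rewrite Ril subrr kq_gap ?prefix_ratio_rho ?Ril.
move: Ril; rewrite subr_eq0 eq_sym => /eqP Ril.
by split; rewrite // -kq_gap ?prefix_ratio_rho ?Ril.
Qed.

Lemma simC_linked i l : (0 < i)%N -> (0 < l)%N -> simC D y k i l <-> linked i l.
Proof.
move=> i0 l0; split=> [[yil [[il [ril kil]]|[li [rli kli]]]]|lil].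
- by apply/(linked_lt il); split.
- by apply: linked_sym => //; apply/(linked_lt li); split; rewrite ?yil ?bar_inv.
case: (ltngtP i l) => [il|li|eil].
- by case/(linked_lt il): lil => yil ril kil; split=> //; left.
- have [yil _ _] := lil.
  by case/(linked_lt li): (linked_sym i0 l0 lil) => _ ril kil; split=> //; right.
- by case: lil => yil; move: (bar_nofix (y l)); rewrite -yil eil eqxx.
Qed.

End Prefixes.

Theorem lemma3p5 (G : GBS) (D : {pred E G}) (hD : orientation D)
    (n : nat) (a : nat -> V G) (y : nat -> E G) (k : nat -> int)
    (hf : factorization n a y) :
  (forall i, (1 <= i <= n)%N -> approxC D n y k i i) /\
  (forall i j, (1 <= i <= n)%N -> (1 <= j <= n)%N ->
     approxC D n y k i j -> approxC D n y k j i) /\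
  (forall i j l, (1 <= i <= n)%N -> (1 <= j <= n)%N -> (1 <= l <= n)%N ->
     approxC D n y k i j -> approxC D n y k j l -> approxC D n y k i l).
Proof.
pose S l := (1 <= l <= n)%N.
have simC_sym i l : S i -> S l -> simC D y k i l -> simC D y k l i.
  move=> /andP [i0 _] /andP [l0 _].
  by rewrite !(simC_linked y k hD) //; apply: linked_sym.
have simC_trans3 b c d e : S b -> S c -> S d -> S e ->
    simC D y k b c -> simC D y k c d -> simC D y k d e -> simC D y k b e.
  move=> /andP [b0 _] /andP [c0 _] /andP [d0 _] /andP [e0 _].
  rewrite !(simC_linked y k hD) //; exact: (linked_trans3 hD).
split; first by move=> i _; left.
split; first exact: (two_step_sym simC_sym).
exact: (two_step_trans simC_trans3).
Qed.
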